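(* Let $f_\mu:\mathbb{R}^d\to[0,\infty)$ be measurable and satisfy $$\sum_{r\ge1}r^{d-1}\sup_{x\in\mathbb{R}^d\setminus B(0,r-1)}f_\mu(x)<\infty.$$ Then there exists a constant $C>0$ such that for every affine hyperplane $\mathcal H\subset\mathbb{R}^d$, $$\int_{\mathcal H}f_\mu(x)\,d\mathcal H^{d-1}(x)\le C.$$
   Context: $\mathcal H^{d-1}$ denotes the $(d-1)$-dimensional Hausdorff measure on $\mathbb{R}^d$; $B(0,r)$ is the Euclidean ball of radius $r$ centered at $0$. *)

(* Points of R^d are d-tuples of reals
   (d.-tuple R carries the product = Borel sigma-algebra of R^d). *)
From HB Require Import structures.
From mathcomp Require Import all_boot all_order all_algebra.
From mathcomp Require Import all_classical all_reals all_analysis.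

Set Implicit Arguments.
Unset Strict Implicit.
Unset Printing Implicit Defensive.

Import Order.TTheory GRing.Theory Num.Theory.
Local Open Scope classical_set_scope.
Local Open Scope ring_scope.

Section Defs.
Variables (R : realType) (d : nat).
Local Notation V := (d.-tuple R).

Definition dotp (x y : V) : R := \sum_(i < d) tnth x i * tnth y i.
Definition enorm (x : V) : R := Num.sqrt (\sum_(i < d) tnth x i ^+ 2).
Definition edist (x y : V) : R :=
  Num.sqrt (\sum_(i < d) (tnth x i - tnth y i) ^+ 2).

Definition eball0 (r : R) : set V := [set x | enorm x < r].

Definition hyperplane (a : V) (b : R) : set V := [set x | dotp a x = b].

(* diameter (diam of the empty set taken to be 0) *)
Definition ediam (C : set V) : \bar R :=
  ereal_sup ([set 0%:E] `|` [set (edist x y)%:E | x in C & y in C]).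

Definition haus_term (s : nat) (C : set V) : \bar R :=
  if pselect (C = set0) then 0%E else ((fine (ediam C) / 2) ^+ s)%:E.

Definition hausdorff_delta (s : nat) (delta : R) (A : set V) : \bar R :=
  ereal_inf [set (\sum_(0 <= i <oo) haus_term s (C i))%E |
    C in [set C : nat -> set V |
          A `<=` \bigcup_i C i /\ forall i, (ediam (C i) <= delta%:E)%E]].

(* s-dimensional Hausdorff (outer) measure: H^s(A) = lim_{delta->0+}
   H^s_delta(A) = sup_{delta>0} H^s_delta(A) (monotone in delta).
   (unnormalized: the constant omega_s is taken to be 1) *)
Definition hausdorff (s : nat) (A : set V) : \bar R :=
  ereal_sup [set hausdorff_delta s delta A | delta in [set delta : R | 0 < delta]].

(* integral of a nonnegative f over the set S w.r.t. H^s, via the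
   layer-cake formula  int_S f dH^s = int_0^oo H^s(S /\ {f > t}) dt *)
Definition hausdorff_integral (s : nat) (S : set V) (f : V -> R) : \bar R :=
  (\int[@lebesgue_measure R]_(t in [set t : R | (0 <= t)%R])
      hausdorff s (S `&` [set x | (t < f x)%R]))%E.

End Defs.

(* For a level t >= 0 let r be least with m_r := sup_{|x| >= r - 1} f <= t:
   the slice of the superlevel set {f > t} by a hyperplane H lies in
   H /\ B(0, r - 1).  Projecting H onto the coordinates other than one where
   its normal is largest, a grid of M^(d-1) cells of mesh 2 rho / M covers
   H /\ B(0, rho) by sets of diameter <= d^2 (2 rho / M), so
   H^(d-1)(H /\ B(0, rho)) <= (d^2 rho)^(d-1).  Hence
   H^(d-1)(H /\ {f > t}) <= sum_(r >= 1) (d^2 r)^(d-1) [t < m_r], and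
   integrating in t (layer-cake formula) bounds the integral of f over H by
   d^(2(d-1)) sum_(r >= 1) r^(d-1) m_r, independently of H. *)

From Pilot Require Import Defs.
From HB Require Import structures.
From mathcomp Require Import all_boot all_order all_algebra.
From mathcomp Require Import all_classical all_reals all_analysis.
From mathcomp Require Import measurable_realfun ring lra zify.

Set Implicit Arguments.
Unset Strict Implicit.
Unset Printing Implicit Defensive.
Import Order.TTheory GRing.Theory Num.Theory.
Local Open Scope classical_set_scope.
Local Open Scope ring_scope.

Section EuclideanGeometry.
Variables (R : realType) (d : nat).
Local Notation V := (d.-tuple R).

Lemma coord_le_enorm (x : V) i : `|tnth x i| <= enorm x.
Proof.
rewrite /enorm -(sqrtr_sqr (tnth x i)) ler_sqrt; last first.
  by apply: sumr_ge0 => j _; rewrite sqr_ge0.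
rewrite (bigD1 i) //= lerDl; apply: sumr_ge0 => j _; exact: sqr_ge0.
Qed.

Lemma edist_le_coord (x y : V) (c : R) : 0 <= c ->
  (forall i, `|tnth x i - tnth y i| <= c) -> Defs.edist x y <= d%:R * c.
Proof.
move=> c0 xy_c; have dc0 : 0 <= d%:R * c by rewrite mulr_ge0.
rewrite /Defs.edist -(ger0_norm dc0) -sqrtr_sqr ler_sqrt ?sqr_ge0 //.
apply: (@le_trans _ _ (\sum_(i < d) c ^+ 2)).
  apply: ler_sum => i _; rewrite -real_normK ?num_real //.
  by rewrite lerXn2r ?nnegrE.
rewrite sumr_const card_ord exprMn -[c ^+ 2 *+ d]mulr_natl.
apply: ler_wpM2r; first exact: sqr_ge0.
by rewrite -natrX ler_nat; nia.
Qed.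

(* Along [a.x = b], the coordinate on which [|a_k|] is maximal is controlled
   by all the others: [a_k (x_k - y_k) = - sum_(i != k) a_i (x_i - y_i)]. *)
Lemma hyperplane_pivot_coord_le (a x y : V) (b h : R) (k : 'I_d) :
  tnth a k != 0 -> (forall i, `|tnth a i| <= `|tnth a k|) -> 0 <= h ->
  hyperplane a b x -> hyperplane a b y ->
  (forall i, i != k -> `|tnth x i - tnth y i| <= h) ->
  `|tnth x k - tnth y k| <= d%:R * h.
Proof.
move=> ak0 amax h0 hx hy xy_h.
have : \sum_(i < d) tnth a i * (tnth x i - tnth y i) = 0.
  under eq_bigr do rewrite mulrBr.
  by rewrite sumrB -/(dotp a x) -/(dotp a y) hx hy subrr.
rewrite (bigD1 k) //= => /eqP; rewrite addr_eq0 => /eqP akE.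
have ak_gt0 : 0 < `|tnth a k| by rewrite normr_gt0.
rewrite -(ler_pM2l ak_gt0) -normrM akE normrN.
apply: (le_trans (ler_norm_sum _ _ _)).
apply: (@le_trans _ _ (\sum_(i < d | i != k) `|tnth a k| * h)).
  by apply: ler_sum => i ik; rewrite normrM ler_pM // xy_h.
apply: (@le_trans _ _ (\sum_(i < d) `|tnth a k| * h)).
  by rewrite [X in _ <= X](bigD1 k) //= lerDr mulr_ge0.
by rewrite sumr_const card_ord -[(`|tnth a k| * h) *+ d]mulr_natl mulrCA.
Qed.

Lemma exists_max_abs_coord (a : V) :
  (exists i, tnth a i != 0) ->
  exists2 k, tnth a k != 0 & forall i, `|tnth a i| <= `|tnth a k|.
Proof.
move=> [j aj_neq0].
have [k _ k_max] := @arg_maxP _ _ _ j xpredT (fun i => `|tnth a i|) isT.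
exists k => [|i]; last exact: k_max.
by rewrite -normr_gt0; apply: lt_le_trans (k_max j isT); rewrite normr_gt0.
Qed.

End EuclideanGeometry.

Section HausdorffMeasure.
Variables (R : realType) (d : nat).
Local Notation V := (d.-tuple R).

Lemma ediam_ge0 (C : set V) : (0 <= ediam C)%E.
Proof. by apply: ereal_sup_ubound; left. Qed.

Lemma ediam_le (C : set V) (D : R) : 0 <= D ->
  (forall x y, C x -> C y -> Defs.edist x y <= D) -> (ediam C <= D%:E)%E.
Proof.
move=> D0 CD; apply: ge_ereal_sup => _ [->|[x Cx [y Cy <-]]].
  by rewrite lee_fin.
by rewrite lee_fin CD.
Qed.

Lemma haus_term_set0 s : haus_term s (@set0 V) = 0%E.
Proof. by rewrite /haus_term; case: (pselect (@set0 V = set0)). Qed.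

Lemma haus_term_ge0 s (C : set V) : (0 <= haus_term s C)%E.
Proof.
rewrite /haus_term; case: (pselect (C = set0)) => /= [//|_].
by rewrite lee_fin exprn_ge0 // divr_ge0 // fine_ge0 // ediam_ge0.
Qed.

Lemma haus_term_le s (C : set V) (D : R) : 0 <= D ->
  (forall x y, C x -> C y -> Defs.edist x y <= D) ->
  (haus_term s C <= ((D / 2) ^+ s)%:E)%E.
Proof.
move=> D0 CD; rewrite /haus_term; case: (pselect (C = set0)) => /= [_|_].
  by rewrite lee_fin exprn_ge0 // divr_ge0.
have := ediam_le D0 CD; have := ediam_ge0 C.
case: (ediam C) => //= e; rewrite !lee_fin => e0 eD.
by rewrite lerXn2r ?nnegrE ?divr_ge0 // ler_pM2r.
Qed.

Lemma hausdorff_ge0 s (A : set V) : (0 <= hausdorff s A)%E.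
Proof.
apply: (@le_trans _ _ (hausdorff_delta s 1 A)); last first.
  by apply: ereal_sup_ubound; exists 1 => //; exact: ltr01.
apply: le_ereal_inf_tmp => _ [C _ <-]; apply: nneseries_ge0 => n _ _.
exact: haus_term_ge0.
Qed.

Lemma le_hausdorff s (A B : set V) : A `<=` B ->
  (hausdorff s A <= hausdorff s B)%E.
Proof.
move=> AB; apply: ge_ereal_sup => _ [delta delta0 <-].
apply: (@le_trans _ _ (hausdorff_delta s delta B)).
  apply: ereal_inf_le_tmp => _ [C [BC Cdelta] <-].
  by exists C => //; split => //; exact: subset_trans BC.
by apply: ereal_sup_ubound; exists delta.
Qed.

Lemma hausdorff_delta_le_fincover (T : finType) (C : T -> set V) s
    (delta D : R) (A : set V) :
  0 <= D -> D <= delta -> A `<=` \bigcup_t C t ->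
  (forall t x y, C t x -> C t y -> Defs.edist x y <= D) ->
  (hausdorff_delta s delta A <= (#|T|%:R * (D / 2) ^+ s)%:E)%E.
Proof.
move=> D0 Ddelta AC CD.
pose Cn i := if insub i : option 'I_#|T| is Some j then C (enum_val j) else set0.
have CnD i x y : Cn i x -> Cn i y -> Defs.edist x y <= D.
  by rewrite /Cn; case: insub => // j; exact: CD.
apply: (@le_trans _ _ (\sum_(0 <= i <oo) haus_term s (Cn i))%E).
  apply: ereal_inf_lbound; exists Cn => //; split.
    move=> x /AC [t _ Ctx]; exists (enum_rank t) => //.
    by rewrite /Cn valK enum_rankK.
  by move=> i; apply: le_trans (ediam_le D0 (CnD i)) _; rewrite lee_fin.
rewrite (@nneseries_split _ _ 0 #|T|); last by move=> *; exact: haus_term_ge0.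
rewrite add0n eseries0 ?adde0; last first.
  by move=> i iT _; rewrite /Cn insubF ?haus_term_set0 // ltnNge iT.
apply: (@le_trans _ _ (\sum_(0 <= i < #|T|) ((D / 2) ^+ s)%:E)%E).
  by apply: lee_sum => i _; exact: haus_term_le (CnD i).
by rewrite sumEFin sumr_const_nat subn0 mulr_natl.
Qed.

Lemma hausdorff_set0 s : hausdorff s (@set0 V) = 0%E.
Proof.
apply/le_anti; rewrite hausdorff_ge0 andbT.
apply: ge_ereal_sup => _ [delta delta0 <-].
have := @hausdorff_delta_le_fincover void (fun=> set0) s delta 0 set0.
by rewrite card_void mul0r; apply => //; exact: ltW.
Qed.

End HausdorffMeasure.

Section HyperplaneGrid.
Variables (R : realType) (d : nat) (a : d.-tuple R) (b : R) (k : 'I_d).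
Hypotheses (ak_neq0 : tnth a k != 0) (ak_max : forall i, `|tnth a i| <= `|tnth a k|).
Local Notation V := (d.-tuple R).
Local Notation coord := {i : 'I_d | i != k}.

Definition grid_cell (r h : R) (M : nat) (m : {ffun coord -> 'I_M}) : set V :=
  hyperplane a b `&` [set x | forall j : coord,
    (m j)%:R * h <= tnth x (val j) + r < (m j)%:R * h + h].

Lemma grid_cell_edist_le r h M m x y : 0 <= h ->
  grid_cell r h (M := M) m x -> grid_cell r h m y ->
  Defs.edist x y <= d%:R ^+ 2 * h.
Proof.
move=> h0 [hx xm] [hy ym].
have xy_h i : i != k -> `|tnth x i - tnth y i| <= h.
  move=> ik; have := xm (exist _ i ik); have := ym (exist _ i ik) => /=.
  by rewrite ler_norml => /andP[? ?] /andP[? ?]; apply/andP; split; lra.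
rewrite expr2 -mulrA; apply: edist_le_coord; first by rewrite mulr_ge0.
move=> i; have [->|ik] := eqVneq i k.
  exact: (hyperplane_pivot_coord_le ak_neq0 ak_max h0 hx hy xy_h).
apply: le_trans (xy_h i ik) _.
by rewrite ler_peMl // ler1n (leq_ltn_trans _ (ltn_ord k)).
Qed.

Lemma grid_cell_cover r h M : 0 < h -> 2 * r <= h * M%:R ->
  hyperplane a b `&` eball0 r `<=` \bigcup_m grid_cell r h (M := M) m.
Proof.
move=> h_gt0 rhM x [hx xr].
have x_r j : -r < tnth x j < r.
  by rewrite -ltr_norml; apply: le_lt_trans (coord_le_enorm x j) xr.
have idx_ge0 j : 0 <= (tnth x j + r) / h.
  by rewrite divr_ge0 ?(ltW h_gt0) //; have /andP[? ?] := x_r j; lra.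
have idx_lt (j : coord) : (Num.truncn ((tnth x (val j) + r) / h) < M)%N.
  rewrite truncn_lt_nat // ltr_pdivrMr // mulrC.
  by apply: lt_le_trans rhM; have /andP[? ?] := x_r (val j); lra.
exists [ffun j => Ordinal (idx_lt j)] => //; split => // j; rewrite ffunE /=.
have /andP[lo hi] := truncn_itv (idx_ge0 (val j)).
rewrite -ler_pdivlMr // lo /=.
by move: hi; rewrite ltr_pdivrMr // -natr1 mulrDl mul1r.
Qed.

Lemma hausdorff_hyperplane_ball r : 0 < r ->
  (hausdorff d.-1 (hyperplane a b `&` eball0 r) <=
    ((d%:R ^+ 2 * r) ^+ d.-1)%:E)%E.
Proof.
move=> r_gt0; apply: ge_ereal_sup => _ [delta /= delta_gt0 <-].
pose M := (Num.truncn (2 * d%:R ^+ 2 * r / delta)).+1.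
pose h := 2 * r / M%:R.
have M_gt0 : (0 : R) < M%:R by rewrite ltr0n.
have h_gt0 : 0 < h by rewrite divr_gt0 // mulr_gt0.
have hM : h * M%:R = 2 * r by rewrite divfK // gt_eqF.
have h_delta : d%:R ^+ 2 * h <= delta.
  rewrite -(ler_pM2r M_gt0) -mulrA hM mulrCA -ler_pdivrMl //.
  by rewrite mulrC mulrA ltW // truncnS_gt.
have rhM : 2 * r <= h * M%:R by rewrite hM.
apply: le_trans (hausdorff_delta_le_fincover _ _ h_delta
  (grid_cell_cover h_gt0 rhM) _) _.
- by rewrite mulr_ge0 ?exprn_ge0 // ltW.
- by move=> m x y; exact: grid_cell_edist_le (ltW h_gt0).
rewrite card_ffun card_ord card_sig cardC1 card_ord natrX -exprMn.
rewrite lee_fin le_eqVlt; apply/orP; left; apply/eqP; congr (_ ^+ _).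
rewrite /h; field; exact: lt0r_neq0.
Qed.

End HyperplaneGrid.

Section NonnegSeries.
Variable R : realType.
Local Open Scope ereal_scope.

Lemma nneseries_term_le (u : (\bar R)^nat) n : (forall i, 0 <= u i) ->
  u n <= \sum_(i <oo) u i.
Proof.
by move=> u0; rewrite (nneseriesD1 (n := n)) // leeDl // nneseries_ge0.
Qed.

Lemma nneseries_ge1_pinfty (u : (\bar R)^nat) : (forall i, 1 <= u i) ->
  \sum_(i <oo) u i = +oo.
Proof.
move=> u_ge1; have u_ge0 i : 0 <= u i by exact: le_trans (u_ge1 i).
have n_le n : n%:R%:E <= \sum_(i <oo) u i.
  apply: le_trans (nneseries_lim_ge n (fun i _ _ => u_ge0 i)).
  apply: (@le_trans _ _ (\sum_(0 <= i < n) 1%:E)); last exact: lee_sum.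
  by rewrite sumEFin sumr_const_nat subn0.
move: n_le; case: (\sum_(i <oo) u i) => [c /(_ (Num.truncn c).+1)||/(_ 0%N)] //.
by rewrite lee_fin leNgt truncnS_gt.
Qed.

End NonnegSeries.

Lemma ge0_le_integral_nonmeasurable d (T : measurableType d) (R : realType)
    (mu : {measure set T -> \bar R}) (D : set T) (f g : T -> \bar R) :
  (forall x, D x -> 0 <= f x)%E -> (forall x, D x -> f x <= g x)%E ->
  (\int[mu]_(x in D) f x <= \int[mu]_(x in D) g x)%E.
Proof.
move=> f_ge0 fg; have g_ge0 x : D x -> (0 <= g x)%E.
  by move=> Dx; exact: le_trans (f_ge0 x Dx) (fg x Dx).
rewrite !ge0_integralE //; apply: ereal_sup_le => _ [h hf <-]; exists h => // x.
apply: le_trans (hf x) _; rewrite /patch; case: ifP => // /set_mem; exact: fg.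
Qed.

Lemma set_ge0E (R : realType) : [set t : R | 0 <= t] = `[0, +oo[%classic.
Proof. by apply/seteqP; split => t /=; rewrite in_itv /= andbT. Qed.

Lemma ge0_integral_indic_itv (R : realType) (c x : R) : 0 <= c -> 0 <= x ->
  (\int[@lebesgue_measure R]_(t in [set t : R | (0 <= t)%R])
    (c%:E * (\1_(`[0, x[%classic) t)%:E))%E = (c * x)%:E.
Proof.
move=> c_ge0 x_ge0.
rewrite set_ge0E ge0_integralZl_EFin //; last first.
  by apply/measurable_EFinP; exact: measurable_indic.
rewrite integral_indic // setIidl; last first.
  by move=> t /=; rewrite !in_itv /= andbT => /andP[].
rewrite EFinM; congr (_ * _)%E; apply: eq_trans (lebesgue_measure_itv `[0, x[) _.
rewrite /= lte_fin; have [->|x_neq0] := eqVneq x 0; first by rewrite ltxx.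
by rewrite lt_def x_neq0 x_ge0 oppr0 adde0.
Qed.

Section TailSupremum.
Variables (R : realType) (d : nat) (f : d.-tuple R -> R).
Hypotheses (d_gt0 : (0 < d)%N) (f_ge0 : forall x, 0 <= f x).

Definition tail_sup (r : nat) : \bar R :=
  ereal_sup [set (f x)%:E | x in ~` eball0 (r%:R - 1)].

Lemma tail_sup_ub r x : r%:R - 1 <= enorm x -> ((f x)%:E <= tail_sup r)%E.
Proof.
by move=> xr; apply: ereal_sup_ubound; exists x => //; apply/negP; rewrite -leNgt.
Qed.

Lemma tail_sup_ge0 r : (0 <= tail_sup r)%E.
Proof.
pose x := [tuple (r%:R : R) | i < d].
apply: le_trans (tail_sup_ub (x := x) _); first by rewrite lee_fin.
apply: le_trans (coord_le_enorm x (Ordinal d_gt0)).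
by rewrite tnth_mktuple ger0_norm // gerBl.
Qed.

Definition tail_series : \bar R :=
  (\sum_(1 <= r <oo) ((r ^ d.-1)%:R%:E * tail_sup r))%E.

Lemma tail_seriesE :
  tail_series = (\sum_(n <oo) ((n.+1 ^ d.-1)%:R%:E * tail_sup n.+1))%E.
Proof.
rewrite /tail_series -nneseries_addn; last first.
  by move=> r; rewrite mule_ge0 ?tail_sup_ge0.
by apply: eq_eseriesr => n _; rewrite addn1.
Qed.

Lemma tail_series_ge0 : (0 <= tail_series)%E.
Proof.
by rewrite tail_seriesE nneseries_ge0 // => n _ _; rewrite mule_ge0 ?tail_sup_ge0.
Qed.

Hypothesis tail_series_fin : (tail_series < +oo)%E.

Lemma tail_sup_fin_num n : tail_sup n.+1 \is a fin_num.
Proof.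
rewrite ge0_fin_numE ?tail_sup_ge0 //.
have term_ge0 m : (0 <= (m.+1 ^ d.-1)%:R%:E * tail_sup m.+1)%E.
  by rewrite mule_ge0 ?lee_fin ?tail_sup_ge0.
have := nneseries_term_le n term_ge0.
rewrite -tail_seriesE => /le_lt_trans/(_ tail_series_fin).
rewrite !ltey; apply: contra => /eqP ->.
by rewrite mulry gtr0_sg ?mul1e // ltr0n expn_gt0.
Qed.

Definition tail_bound (r : nat) : R := fine (tail_sup r).

Lemma tail_boundE n : tail_sup n.+1 = (tail_bound n.+1)%:E.
Proof. by rewrite fineK ?tail_sup_fin_num. Qed.

Lemma tail_bound_ge0 r : 0 <= tail_bound r.
Proof. exact/fine_ge0/tail_sup_ge0. Qed.

Lemma superlevel_sub_ball n t : tail_bound n.+1 <= t ->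
  [set x | t < f x] `<=` eball0 n%:R.
Proof.
move=> bound_le_t x t_lt_fx; rewrite /eball0 /= ltNge; apply/negP => nx.
have := tail_sup_ub (r := n.+1) (x := x); rewrite tail_boundE lee_fin.
rewrite -natr1 addrK => /(_ nx) fx_le.
by have := lt_le_trans t_lt_fx (le_trans fx_le bound_le_t); rewrite ltxx.
Qed.

Definition level_majorant (t : R) : \bar R :=
  (\sum_(n <oo)
    ((d%:R ^+ 2 * n.+1%:R) ^+ d.-1)%:E *
    (\1_(`[0, tail_bound n.+1[%classic) t)%:E)%E.

Lemma hausdorff_superlevel_le (a : d.-tuple R) b k (t : R) :
  tnth a k != 0 -> (forall i, `|tnth a i| <= `|tnth a k|) -> 0 <= t ->
  (hausdorff d.-1 (hyperplane a b `&` [set x | (t < f x)%R]) <=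
   level_majorant t)%E.
Proof.
move=> ak_neq0 ak_max t_ge0.
pose coef n : R := (d%:R ^+ 2 * n.+1%:R) ^+ d.-1.
have termE n : t < tail_bound n.+1 ->
    ((coef n)%:E * (\1_(`[0, tail_bound n.+1[%classic) t)%:E)%E = (coef n)%:E.
  by move=> t_lt; rewrite indicE mem_set ?mule1 //= in_itv /= t_ge0.
have term_ge0 n :
    (0 <= (coef n)%:E * (\1_(`[0, tail_bound n.+1[%classic) t)%:E)%E.
  by rewrite mule_ge0 // lee_fin ?exprn_ge0 ?mulr_ge0 ?exprn_ge0.
have [exists_n|] := pselect (exists n, tail_bound n.+1 <= t); last first.
  move=> /forallNP all_gt; suff -> : level_majorant t = +oo%E by exact: leey.
  apply: nneseries_ge1_pinfty => n.
  rewrite termE ?ltNge ?(introN idP (all_gt n)) //.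
  by rewrite lee_fin exprn_ege1 // -natrX -natrM ler1n muln_gt0 expn_gt0 d_gt0.
have [n0 bound_le_t n0_min] := ex_minnP exists_n.
apply: le_trans (le_hausdorff _ (@setIS _ (hyperplane a b) _ _
  (superlevel_sub_ball bound_le_t))) _.
case: n0 => [|n] in bound_le_t n0_min *.
  have -> : hyperplane a b `&` eball0 0%:R = set0.
    by apply/seteqP; split => x // [_]; rewrite /eball0 /= ltNge sqrtr_ge0.
  by rewrite hausdorff_set0 nneseries_ge0.
have t_lt : t < tail_bound n.+1.
  by rewrite ltNge; apply/negP => /n0_min; rewrite ltnn.
apply: le_trans (hausdorff_hyperplane_ball b ak_neq0 ak_max (ltr0Sn _ n)) _.
by rewrite -/(coef n) -(termE n t_lt); exact: nneseries_term_le.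
Qed.

Lemma integral_level_majorant :
  (\int[@lebesgue_measure R]_(t in [set t : R | (0 <= t)%R])
     level_majorant t = ((d%:R ^+ 2) ^+ d.-1)%:E * tail_series)%E.
Proof.
rewrite integral_nneseries; last 3 first.
- by rewrite set_ge0E; exact: measurable_itv.
- by move=> n; apply/measurable_EFinP; exact: measurable_funM.
- by move=> n t _; rewrite mule_ge0 // lee_fin ?exprn_ge0 ?mulr_ge0 ?exprn_ge0.
rewrite tail_seriesE -nneseriesZl; last first.
  by move=> n _; rewrite mule_ge0 ?lee_fin ?tail_sup_ge0.
apply: eq_eseriesr => n _.
rewrite ge0_integral_indic_itv ?tail_bound_ge0 ?exprn_ge0 ?mulr_ge0 ?exprn_ge0 //.
by rewrite tail_boundE -!EFinM exprMn natrX mulrA.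
Qed.

End TailSupremum.

Theorem lemmaF2 (R : realType) (d : nat) (f : d.-tuple R -> R) :
  (0 < d)%N ->
  measurable_fun setT f ->
  (forall x, 0 <= f x) ->
  (\sum_(1 <= r <oo)
      ((r ^ d.-1)%:R%:E *
       ereal_sup [set (f x)%:E | x in ~` eball0 (r%:R - 1)]) < +oo)%E ->
  exists C : R, 0 < C /\
    forall (a : d.-tuple R) (b : R), (exists i, tnth a i != 0) ->
      (hausdorff_integral d.-1 (hyperplane a b) f <= C%:E)%E.
Proof.
move=> d_gt0 _ f_ge0 tail_fin.
have S_ge0 := tail_series_ge0 d_gt0 f_ge0.
have S_fin_num : tail_series f \is a fin_num by rewrite ge0_fin_numE.
pose c : R := (d%:R ^+ 2) ^+ d.-1.
exists (c * fine (tail_series f) + 1); split.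
  by rewrite ltr_pwDr // mulr_ge0 ?exprn_ge0 ?fine_ge0.
move=> a b /exists_max_abs_coord [k ak_neq0 ak_max].
apply: le_trans (ge0_le_integral_nonmeasurable _ _ (fun t t_ge0 =>
  hausdorff_superlevel_le d_gt0 f_ge0 tail_fin b ak_neq0 ak_max t_ge0)) _.
  by move=> t _; exact: hausdorff_ge0.
rewrite (integral_level_majorant d_gt0 f_ge0 tail_fin) -(fineK S_fin_num).
by rewrite -EFinM lee_fin lerDl.
Qed.
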